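(* If $P$ is a finite unit OC interval order, then $\dim(P) \le 3$.
   Context: Posets are finite and reflexive. A finite poset $P$ is a unit OC interval order if each element $x$ of $P$ can be assigned a real interval $I_x$ of length $1$ which is either open, $(a,a+1)$, or closed, $[a,a+1]$ (both types may occur in the same representation), such that for distinct $x,y$, $x<y$ in $P$ if and only if $I_x$ and $I_y$ are disjoint and every point of $I_x$ is less than every point of $I_y$. A realizer of $P$ is a set $\mathcal{R}$ of linear extensions of $P$ such that $x<y$ in $P$ if and only if $x<y$ in every $L \in \mathcal{R}$; the dimension $\dim(P)$ is the minimum cardinality of a realizer. *)

From HB Require Import structures.
From mathcomp Require Import all_boot all_order all_algebra.
From mathcomp Require Import reals.
From Stdlib Require List.
Set Implicit Arguments. Unset Strict Implicit. Unset Printing Implicit Defensive.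
Import Order.TTheory GRing.Theory Num.Theory.
Local Open Scope ring_scope.

Definition is_poset (T : finType) (le : rel T) : Prop :=
  reflexive le /\ antisymmetric le /\ transitive le.

Definition in_unit_interval (R : realType) (a : R) (c : bool) (t : R) : bool :=
  if c then (a <= t) && (t <= a + 1) else (a < t) && (t < a + 1).

Definition unit_OC_interval_order (R : realType) (T : finType) (le : rel T)
  : Prop :=
  exists (a : T -> R) (c : T -> bool),
    forall x y : T, x != y ->
      (le x y <->
        ((forall t : R, ~ (in_unit_interval (a x) (c x) t /\
                           in_unit_interval (a y) (c y) t)) /\
         (forall s t : R, in_unit_interval (a x) (c x) s ->
                          in_unit_interval (a y) (c y) t -> s < t))).

Definition linear_extension (T : finType) (le : rel T) (L : rel T) : Prop :=
  [/\ reflexive L, antisymmetric L, transitive L,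
      total L & forall x y, le x y -> L x y].

Definition realizer (T : finType) (le : rel T) (Ls : seq (rel T)) : Prop :=
  (forall L, List.In L Ls -> linear_extension le L) /\
  (forall x y : T, le x y <-> (forall L, List.In L Ls -> L x y)).

Definition dim_le (T : finType) (le : rel T) (k : nat) : Prop :=
  exists Ls : seq (rel T), realizer le Ls /\ (size Ls <= k)%N.

From mathcomp Require Import all_boot all_order all_algebra.
From mathcomp Require Import reals zify lra.
Set Implicit Arguments. Unset Strict Implicit. Unset Printing Implicit Defensive.
Import Order.TTheory GRing.Theory Num.Theory.
Local Open Scope ring_scope.

(* For unit intervals with left endpoints a_x, a_y, "I_x lies
   entirely left of I_y" means a_x + 1 < a_y, or a_x + 1 = a_y and the two
   intervals are not both closed (such intervals are then also disjoint).
   Writing a_x = k_x + f_x with k_x = floor a_x and 0 <= f_x < 1, the order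
   becomes the "level order": x < y iff k_x + 1 < k_y, or k_x + 1 = k_y and
   (f_x < f_y, or f_x = f_y and not both closed).

   For the level order we give three linear extensions, each
   obtained by sorting lexicographically a real key of length 4 ending with
   an injective tie-breaker.  Two of them group the integer levels into
   blocks {2m, 2m+1} (shifted by 0, resp. 1) and sort each block by f; the
   third sorts by level and reverses the order inside each level.  If x
   precedes y in all three, the third one forces k_x <= k_y, equality is
   ruled out by comparing it with the first one, and when k_x + 1 = k_y one
   of the two block extensions puts x and y into the same block, where its
   key recovers exactly the defining condition of the level order. *)

Fixpoint lexlt (R : realDomainType) (s t : seq R) : bool :=
  match s, t with
  | x :: s', y :: t' => (x < y) || ((x == y) && lexlt s' t')
  | _, _ => false
  end.

Section Lexicographic.
Variable R : realDomainType.
Implicit Types s t u : seq R.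

Lemma lexlt_irr s : lexlt s s = false.
Proof. by elim: s => [|x s IH] //=; rewrite ltxx eqxx IH. Qed.

Lemma lexlt_trans s t u : lexlt s t -> lexlt t u -> lexlt s u.
Proof.
elim: s t u => [|x s IH] [|y t] [|z u] //=.
case/orP=> [xy|/andP[/eqP-> st]]; case/orP=> [yz|/andP[/eqP<- tu]].
- by rewrite (lt_trans xy yz).
- by rewrite xy.
- by rewrite yz.
- by rewrite eqxx (IH _ _ st tu) orbT.
Qed.

Lemma lexlt_total s t : size s = size t -> [|| s == t, lexlt s t | lexlt t s].
Proof.
elim: s t => [|x s IH] [|y t] //= [] /IH.
case: (ltgtP x y) => [_|_|->]; rewrite ?orbT //= eqseq_cons eqxx /=.
by case/or3P=> [/eqP->|->|->]; rewrite ?eqxx ?orbT.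
Qed.

Lemma lexlt_cons_eq a s t : lexlt (a :: s) (a :: t) = lexlt s t.
Proof. by rewrite /= ltxx eqxx. Qed.

Lemma lexlt_opp s t : lexlt (map -%R s) (map -%R t) = lexlt t s.
Proof.
elim: s t => [|x s IH] [|y t] //=.
by rewrite ltrN2 eqr_opp IH (eq_sym x).
Qed.

End Lexicographic.

Definition key_order (R : realDomainType) (T : finType) (key : T -> seq R)
  : rel T := fun x y => (x == y) || lexlt (key x) (key y).

Lemma key_order_linear_extension (R : realDomainType) (T : finType)
    (le : rel T) (key : T -> seq R) (n : nat) :
  injective key -> (forall x, size (key x) = n) ->
  (forall x y, x != y -> le x y -> lexlt (key x) (key y)) ->
  linear_extension le (key_order key).
Proof.
move=> key_inj key_size key_le; split.
- by move=> x; rewrite /key_order eqxx.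
- move=> x y /andP[]; rewrite /key_order; case: (eqVneq x y) => //= _ h1 h2.
  by have := lexlt_trans h1 h2; rewrite lexlt_irr.
- move=> y x z; rewrite /key_order; case: (eqVneq x y) => [->//|_] /=.
  case: (eqVneq y z) => [->|_] /=; first by move=> ->; rewrite orbT.
  by move=> h1 h2; rewrite (lexlt_trans h1 h2) orbT.
- move=> x y; rewrite /key_order; case: (eqVneq x y) => [//|nxy] /=.
  have := lexlt_total (etrans (key_size x) (esym (key_size y))).
  case/or3P=> [/eqP/key_inj xy|->//|->]; last by rewrite orbT.
  by rewrite xy eqxx in nxy.
- move=> x y lxy; rewrite /key_order; case: (eqVneq x y) => //= nxy.
  exact: key_le.
Qed.

Lemma dim_le_of_extensions (T : finType) (le : rel T) (Ls : seq (rel T)) :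
  reflexive le -> (forall L, List.In L Ls -> linear_extension le L) ->
  (forall x y, x != y -> (forall L, List.In L Ls -> L x y) -> le x y) ->
  dim_le le (size Ls).
Proof.
move=> le_refl Ls_ext Ls_le; exists Ls; split=> //; split=> // x y; split.
  by move=> lxy L /Ls_ext [_ _ _ _]; apply.
by case: (eqVneq x y) => [-> _|nxy]; [exact: le_refl | exact: Ls_le].
Qed.

(* Levels are grouped into blocks of two consecutive integers: with shift s,
   level m lies in block (m + s) %/ 2 and is the lower level of its block
   iff m + s is even. *)
Lemma block_lt_far (m n s : int) : m + 1 < n -> ((m + s) %/ 2)%Z < ((n + s) %/ 2)%Z.
Proof. by move=> mn; lia. Qed.

Lemma block_step (m n s : int) : n = m + 1 ->
  ((m + s) %/ 2)%Z < ((n + s) %/ 2)%Z \/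
  [/\ ((m + s) %/ 2)%Z = ((n + s) %/ 2)%Z, ((m + s) %% 2)%Z = 0
    & ((n + s) %% 2)%Z = 1].
Proof.
move=> ->; have [ms_even|ms_odd] : ((m + s) %% 2 = 0 \/ (m + s) %% 2 = 1)%Z.
  by lia.
- by right; split; lia.
- by left; lia.
Qed.

Lemma block_step_shared (m n : int) : n = m + 1 ->
  exists2 s : int, (s == 0) || (s == 1) &
  [/\ ((m + s) %/ 2)%Z = ((n + s) %/ 2)%Z, ((m + s) %% 2)%Z = 0
    & ((n + s) %% 2)%Z = 1].
Proof.
move=> ->; have [m_even|m_odd] : (m %% 2 = 0 \/ m %% 2 = 1)%Z by lia.
- by exists 0 => //; split; lia.
- by exists 1 => //; split; lia.
Qed.

(* Tie-break inside a block between elements with equal f: a lower-level x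
   comes before an upper-level y exactly when they are not both closed. *)
Definition tie_rank (lower closed : bool) : nat :=
  if lower then (if closed then 2 else 0) else (if closed then 1 else 3).

Lemma tie_rank_lt cx cy : (tie_rank true cx < tie_rank false cy)%N = ~~ (cx && cy).
Proof. by case: cx; case: cy. Qed.

Lemma tie_rank_neq cx cy : tie_rank true cx != tie_rank false cy.
Proof. by case: cx; case: cy. Qed.

Section LevelOrder.
Variables (R : realDomainType) (T : finType).
Variables (k : T -> int) (f : T -> R) (c : T -> bool).

Definition level_lt (x y : T) : bool :=
  (k x + 1 < k y) ||
  (k x + 1 == k y) && ((f x < f y) || (f x == f y) && ~~ (c x && c y)).

Definition block (s : int) (x : T) : int := ((k x + s) %/ 2)%Z.
Definition lower (s : int) (x : T) : bool := ((k x + s) %% 2)%Z == 0.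

Definition block_key (s : int) (x : T) : seq R :=
  [:: (block s x)%:~R; f x; (tie_rank (lower s x) (c x))%:R;
      (enum_rank x : nat)%:R].

Definition level_key (x : T) : seq R :=
  (k x)%:~R :: map -%R (behead (block_key 0 x)).

Lemma block_key_inj s : injective (block_key s).
Proof.
by move=> x y [_ _ _ /eqP]; rewrite eqr_nat => /eqP /val_inj /enum_rank_inj.
Qed.

Lemma level_key_inj : injective level_key.
Proof.
move=> x y [_ _ _ /eqP].
by rewrite eqr_opp eqr_nat => /eqP /val_inj /enum_rank_inj.
Qed.

Lemma block_key_same_block s x y :
  block s x = block s y -> lower s x -> ~~ lower s y ->
  lexlt (block_key s x) (block_key s y) =
  (f x < f y) || (f x == f y) && ~~ (c x && c y).
Proof.
rewrite /block_key /= => -> -> /negbTE->; rewrite ltxx eqxx /=.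
by rewrite ltr_nat tie_rank_lt eqr_nat (negbTE (tie_rank_neq _ _)) orbF.
Qed.

Lemma block_key_ext s x y :
  level_lt x y -> lexlt (block_key s x) (block_key s y).
Proof.
have block_lt : block s x < block s y -> lexlt (block_key s x) (block_key s y).
  by rewrite /= ltr_int => ->.
case/orP=> [/(block_lt_far s)/block_lt //|/andP[/eqP kxy fxy]].
case: (block_step s (esym kxy)) => [/block_lt //|[bxy lx ly]].
by rewrite block_key_same_block // /lower ?lx ?ly.
Qed.

Lemma level_key_ext x y : level_lt x y -> lexlt (level_key x) (level_key y).
Proof.
move=> lxy; have kxy : k x < k y by case/orP: lxy => [|/andP[/eqP]]; lia.
by rewrite /= ltr_int kxy.
Qed.

Lemma level_lt_of_keys x y :
  lexlt (block_key 0 x) (block_key 0 y) ->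
  lexlt (block_key 1 x) (block_key 1 y) ->
  lexlt (level_key x) (level_key y) -> level_lt x y.
Proof.
move=> key0 key1 key3.
have kxy : k x <= k y.
  by move: key3; rewrite /= ltr_int eqr_int; case: ltgtP.
rewrite /level_lt; case: (ltgtP (k x) (k y)) kxy => [kxy _|//|kxy _]; last first.
  move: key0 key3; rewrite /level_key /block_key /block kxy !lexlt_cons_eq.
  by rewrite lexlt_opp => h1 h2; have := lexlt_trans h1 h2; rewrite lexlt_irr.
case: (ltgtP (k x + 1) (k y)) => [//||kxy1]; first by lia.
rewrite /=.
have [s /orP[] /eqP-> [bxy lx ly]] := block_step_shared (esym kxy1).
- by rewrite -(@block_key_same_block 0) // /lower ?lx ?ly.
- by rewrite -(@block_key_same_block 1) // /lower ?lx ?ly.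
Qed.

Lemma level_order_dim_le3 (le : rel T) :
  reflexive le -> (forall x y, x != y -> le x y = level_lt x y) ->
  dim_le le 3.
Proof.
move=> le_refl le_level.
have ext key : injective key -> (forall x, size (key x) = 4%N) ->
    (forall x y, level_lt x y -> lexlt (key x) (key y)) ->
    linear_extension le (key_order key).
  move=> key_inj key_size key_lt.
  apply: (key_order_linear_extension key_inj key_size) => x y nxy.
  by rewrite le_level //; apply: key_lt.
pose Ls := [:: key_order (block_key 0); key_order (block_key 1);
               key_order level_key].
apply: (@dim_le_of_extensions _ _ Ls) => //.
  move=> L /= [<-|[<-|[<-|[]]]]; apply: ext => //;
    [exact: block_key_inj | exact: block_key_ext | exact: block_key_inj
    | exact: block_key_ext | exact: level_key_inj | exact: level_key_ext].
move=> x y nxy in_all; rewrite le_level //.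
have key_lt key : List.In (key_order key) Ls -> lexlt (key x) (key y).
  by move/in_all; rewrite /key_order (negbTE nxy).
by apply: level_lt_of_keys; apply: key_lt; rewrite /=; tauto.
Qed.

End LevelOrder.
Section UnitIntervals.
Variable R : realType.
Implicit Types (a ax ay p : R) (cx cy : bool).

Lemma in_unit_interval_inner a (closed : bool) p : a < p -> p < a + 1 ->
  in_unit_interval a closed p.
Proof. by move=> ap pa; rewrite /in_unit_interval; case: closed; rewrite ?ap ?pa ?ltW. Qed.

Lemma unit_interval_precedes ax ay cx cy :
  (forall t, ~ (in_unit_interval ax cx t /\ in_unit_interval ay cy t)) /\
  (forall s t, in_unit_interval ax cx s -> in_unit_interval ay cy t -> s < t)
  <-> (ax + 1 < ay) || (ax + 1 == ay) && ~~ (cx && cy).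
Proof.
have mid a c : in_unit_interval a c (a + 1/2) by apply: in_unit_interval_inner; lra.
split=> [[_ before]|cond].
  have ax_ay := before _ _ (mid ax cx) (mid ay cy).
  case: (ltrP (ax + 1) ay) => [//|ay_le] /=.
  case: (eqVneq (ax + 1) ay) => [touch|ne] /=.
    apply/negP => /andP[cx1 cy1].
    suff : ay < ay by rewrite ltxx.
    by apply: before; rewrite /in_unit_interval ?cx1 ?cy1; apply/andP; split; lra.
  have overlap : ay < ax + 1 by rewrite lt_neqAle eq_sym ne ay_le.
  suff : (ax + 1 + ay) / 2 < (ax + 1 + ay) / 2 by rewrite ltxx.
  by apply: before; apply: in_unit_interval_inner; lra.
have before s t : in_unit_interval ax cx s -> in_unit_interval ay cy t -> s < t.
  rewrite /in_unit_interval; case/orP: cond => [far|/andP[/eqP touch]].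
    by case: cx; case: cy => /andP[? ?] /andP[? ?]; lra.
  by case: cx; case: cy => //= _ /andP[? ?] /andP[? ?]; lra.
by split=> // t [/before tt /tt]; rewrite ltxx.
Qed.

End UnitIntervals.

Lemma int_frac_lt (R : realDomainType) (m n : int) (u v : R) :
  0 <= u < 1 -> 0 <= v < 1 ->
  (m%:~R + u < n%:~R + v) = (m < n) || (m == n) && (u < v).
Proof.
move=> /andP[u0 u1] /andP[v0 v1].
case: (ltgtP m n) => [mn|nm|->] /=.
- have : (m + 1)%:~R <= n%:~R :> R by rewrite ler_int; lia.
  by rewrite intrD => h; lra.
- have : (n + 1)%:~R <= m%:~R :> R by rewrite ler_int; lia.
  by rewrite intrD => h; apply/negbTE; rewrite -leNgt; lra.
- by rewrite ltrD2l.
Qed.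

Lemma int_frac_eq (R : realDomainType) (m n : int) (u v : R) :
  0 <= u < 1 -> 0 <= v < 1 ->
  (m%:~R + u == n%:~R + v) = (m == n) && (u == v).
Proof.
move=> u01 v01; case: (ltgtP m n) => [mn|nm|->] /=.
- by apply: lt_eqF; rewrite int_frac_lt // mn.
- by apply: gt_eqF; rewrite int_frac_lt // nm.
- by rewrite (inj_eq (addrI _)).
Qed.

Section FractionalPart.
Variable R : archiRealFieldType.

Definition fracr (t : R) : R := t - (Num.floor t)%:~R.

Lemma fracr_itv t : 0 <= fracr t < 1.
Proof. by have := floor_itv t; rewrite /fracr intrD => /andP[? ?]; lra. Qed.

Lemma floor_fracr t : t = (Num.floor t)%:~R + fracr t.
Proof. by rewrite /fracr addrC subrK. Qed.

Lemma unit_interval_level_lt (T : finType) (a : T -> R) (c : T -> bool) x y :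
  (a x + 1 < a y) || (a x + 1 == a y) && ~~ (c x && c y) =
  level_lt (fun z => Num.floor (a z)) (fun z => fracr (a z)) c x y.
Proof.
have ax1 : a x + 1 = (Num.floor (a x) + 1)%:~R + fracr (a x).
  by rewrite {1}(floor_fracr (a x)) intrD addrAC.
rewrite ax1 {1 2}(floor_fracr (a y)) int_frac_lt ?int_frac_eq ?fracr_itv //.
by rewrite /level_lt; case: (_ + 1 < _); case: (_ + 1 == _).
Qed.

End FractionalPart.

Theorem theorem2 (R : realType) (T : finType) (le : rel T) :
  is_poset le -> unit_OC_interval_order R le -> dim_le le 3.
Proof.
move=> [le_refl _] [a [c represents]].
apply: (level_order_dim_le3 (k := fun z => Num.floor (a z))
          (f := fun z => fracr (a z)) (c := c) le_refl) => x y nxy.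
rewrite -unit_interval_level_lt.
apply/idP/idP => [/(represents _ _ nxy)/unit_interval_precedes //|].
by move/unit_interval_precedes/(represents _ _ nxy).
Qed.
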